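(* Let $\lambda>0$ and $\alpha_1,\dots,\alpha_n,\alpha^*_1,\dots,\alpha^*_n>0$. Let $X_1,\dots,X_n$ be mutually independent with $X_i\sim\mathrm{GE}(\alpha_i,\lambda)$ and $X^*_1,\dots,X^*_n$ mutually independent with $X^*_i\sim\mathrm{GE}(\alpha^*_i,\lambda)$. If $\sum_{i=1}^{j}\alpha^*_{(i)}\ge\sum_{i=1}^{j}\alpha_{(i)}$ for all $j=1,\dots,n$, then $X_{1:n}\le_{\rm hr}X^*_{1:n}$.
   Context: $X\sim\mathrm{GE}(\alpha,\lambda)$ (generalized exponential) means $X$ has distribution function $(1-e^{-\lambda x})^{\alpha}$, $x>0$. $X_{1:n}=\min_i X_i$. $\alpha_{(1)}\le\dots\le\alpha_{(n)}$ are the components in increasing order. $X\le_{\rm hr}Y$ means the hazard rate of $X$ is pointwise $\ge$ that of $Y$. *)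

From HB Require Import structures.
From mathcomp Require Import all_boot all_order all_algebra.
From mathcomp Require Import all_classical all_reals all_analysis.
Set Implicit Arguments. Unset Strict Implicit. Unset Printing Implicit Defensive.
Import Order.TTheory GRing.Theory Num.Theory.
Local Open Scope classical_set_scope.
Local Open Scope ring_scope.

Definition GE_cdf {R : realType} (a l : R) (x : R) : R :=
  if x <= 0 then 0 else (1 - expR (- (l * x))) `^ a.

(* Mutual independence of a finite family of real random variables:
   product rule for all Borel sets (taking B i = setT gives every subfamily). *)
Definition mutually_independent {d} {T : measurableType d} {R : realType}
  (P : probability T R) (k : nat) (X : 'I_k -> T -> R) : Prop :=
  forall B : 'I_k -> set R, (forall i, measurable (B i)) ->
    fine (P (\bigcap_(i in [set: 'I_k]) (X i @^-1` B i)))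
    = \prod_(i < k) fine (P (X i @^-1` B i)).

Definition has_GE_law {d} {T : measurableType d} {R : realType}
  (P : probability T R) (Y : T -> R) (a l : R) : Prop :=
  forall x : R, P [set w | Y w <= x] = (GE_cdf a l x)%:E.

Definition minRV {T} {R : realType} (n : nat) (X : 'I_n.+1 -> T -> R) : T -> R :=
  fun w => \big[Num.min/X ord0 w]_(i < n.+1) X i w.

Definition survival {d} {T : measurableType d} {R : realType}
  (P : probability T R) (Y : T -> R) (x : R) : R :=
  fine (P [set w | x < Y w]).

Definition hazard {d} {T : measurableType d} {R : realType}
  (P : probability T R) (Y : T -> R) (x : R) : R :=
  - (derive1 (survival P Y) x) / survival P Y x.

Definition hr_le {d} {T : measurableType d} {R : realType}
  (P : probability T R) (Y1 Y2 : T -> R) : Prop :=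
  forall x : R, 0 < x -> hazard P Y2 x <= hazard P Y1 x.

(* Components of a vector sorted increasingly: sorted_comp a i = a_(i+1). *)
Definition sorted_comp {R : realType} (n : nat) (a : 'I_n -> R) : seq R :=
  sort <=%R [seq a i | i <- enum 'I_n].

From HB Require Import structures.
From mathcomp Require Import all_boot all_order all_algebra.
From mathcomp Require Import all_classical all_reals all_analysis.
From mathcomp Require Import ring lra.
Import Order.TTheory GRing.Theory Num.Theory.
Local Open Scope classical_set_scope.
Local Open Scope ring_scope.

(* For x > 0 let H = -ln (1 - e^(-lam x)) > 0, so that GE(a, lam) has cdf e^(-a H) and
   X_{1:n} has survival function prod_i (1 - e^(-alpha_i H)). Hazard rates of independent
   minima add up, and the hazard rate of X_{1:n} at x is (-H'/H) sum_i psi (H alpha_i) with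
   psi y = y / (e^y - 1). Since psi is decreasing and convex on (0, +oo), the tangent-line
   inequality at the sorted alpha*_(i) followed by Abel summation against the partial-sum
   hypothesis gives sum_i psi (H alpha*_i) <= sum_i psi (H alpha_i). *)

Section Calculus.
Context {R : realType}.

Lemma ger0_is_derive_le (f f' : R -> R) {a b : R} : a <= b ->
  (forall x, a <= x <= b -> is_derive x 1 f (f' x)) ->
  (forall x, a < x < b -> 0 <= f' x) -> f a <= f b.
Proof.
move=> ab df f'_ge0.
have df_oo x : x \in `]a, b[ -> is_derive x 1 f (f' x).
  by rewrite in_itv /= => /andP[ax xb]; apply: df; rewrite !ltW.
apply: (@ger0_derive1_le_cc R f a b) => //; rewrite ?in_itv /= ?lexx ?ab //.
- by move=> x /df_oo[].
- move=> x xab; have dfx := df_oo x xab; rewrite derive1E derive_val.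
  by move: xab; rewrite in_itv => /f'_ge0.
- apply: derivable_within_continuous => x; rewrite in_itv /= => /df.
  by case.
Qed.

Lemma tangent_le_of_nondecr_derive (f f' : R -> R) (a : R) :
  {in `]a, +oo[, forall x : R, is_derive x 1 f (f' x)} ->
  {in `]a, +oo[ &, {homo f' : x y / x <= y}} ->
  {in `]a, +oo[ &, forall z y, f z + f' z * (y - z) <= f y}.
Proof.
move=> df f'_nd z y az ay.
have above u t : u \in `]a, +oo[ -> u <= t -> t \in `]a, +oo[.
  by rewrite !in_itv /= !andbT => /lt_le_trans; apply.
pose g t := f t - f' z * t.
have dg t : t \in `]a, +oo[ -> is_derive t 1 g (f' t - f' z).
  move=> /df dft; apply: is_derive_eq.
  by rewrite /GRing.scale /= mulr1.
suff : g z <= g y by rewrite /g; lra.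
have [zy|yz] := leP z y.
- apply: (ger0_is_derive_le g (fun t => f' t - f' z) zy) => t /andP[zt _].
    exact/dg/(above z t az zt).
  rewrite subr_ge0; apply: f'_nd => //; last exact: ltW.
  exact: above z t az (ltW zt).
- rewrite -lerN2.
  apply: (ger0_is_derive_le (- g) (fun t => - (f' t - f' z)) (ltW yz)) => t /andP[yt tz].
    exact/is_deriveN/dg/(above y t ay yt).
  rewrite oppr_ge0 subr_le0; apply: f'_nd => //; last exact: ltW.
  exact: above y t ay (ltW yt).
Qed.

Lemma is_derive_bigprod {I : Type} (s : seq I) {g : I -> R -> R} {dg : I -> R}
    {x : R} :
  (forall i, is_derive x 1 (g i) (dg i)) -> (forall i, g i x != 0) ->
  is_derive x 1 (fun y => \prod_(i <- s) g i y)
    ((\prod_(i <- s) g i x) * \sum_(i <- s) dg i / g i x).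
Proof.
move=> dgi gi_neq0; elim: s => [|j s IH].
  under eq_fun do rewrite big_nil.
  by rewrite big_nil mul1r big_nil; exact: is_derive_cst.
under eq_fun do rewrite big_cons.
apply: is_derive_eq; rewrite !big_cons /GRing.scale /=.
by field; exact: gi_neq0.
Qed.

End Calculus.

Lemma summation_by_parts {R : pzRingType} (d e : nat -> R) (m : nat) :
  \sum_(i < m.+1) d i * e i =
  d m * (\sum_(i < m.+1) e i) - \sum_(i < m) (d i.+1 - d i) * (\sum_(l < i.+1) e l).
Proof.
elim: m => [|m IH]; first by rewrite !big_ord1 big_ord0 subr0.
rewrite big_ord_recr IH /= [\sum_(i < m.+2) e i]big_ord_recr.
rewrite [\sum_(i < m.+1) (_ - _) * _]big_ord_recr /=.
set E := \sum_(i < m.+1) e i; set S := \sum_(i < m) _.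
rewrite mulrDr mulrBl opprD opprB [RHS]addrC addrA addrA subrK.
by rewrite (addrC (- S)).
Qed.

Lemma sumr_mul_ge0_by_parts {R : numDomainType} (d e : nat -> R) (k : nat) :
  (forall i, (i.+1 < k)%N -> d i <= d i.+1) -> d k.-1 <= 0 ->
  (forall j, (1 <= j <= k)%N -> \sum_(i < j) e i <= 0) ->
  0 <= \sum_(i < k) d i * e i.
Proof.
case: k => [|m] d_nd dm_le0 E_le0; first by rewrite big_ord0.
rewrite summation_by_parts subr_ge0 (@le_trans _ _ 0) //.
- rewrite -oppr_ge0 -sumrN; apply: sumr_ge0 => i _; rewrite oppr_ge0.
  apply: mulr_ge0_le0; first by rewrite subr_ge0 d_nd // ltnS.
  by apply: E_le0; rewrite /= ltnS ltnW.
- by apply: mulr_le0 => //; apply: E_le0; rewrite /= leqnn.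
Qed.

Section WeakMajorization.
Context {R : realType}.

Lemma size_sorted_comp {k} (a : 'I_k -> R) : size (sorted_comp a) = k.
Proof. by rewrite size_sort size_map size_enum_ord. Qed.

Lemma sum_sorted_comp {V : nmodType} {k} (a : 'I_k -> R) (F : R -> V) :
  \sum_(i < k) F (a i) = \sum_(i < k) F (sorted_comp a)`_i.
Proof.
transitivity (\sum_(r <- sorted_comp a) F r).
  rewrite /sorted_comp (perm_big _ (permEl (perm_sort _ _))) big_map.
  by rewrite big_enum.
by rewrite (big_nth 0) size_sorted_comp big_mkord.
Qed.

Lemma sorted_comp_nondecr {k} (a : 'I_k -> R) i : (i.+1 < k)%N ->
  (sorted_comp a)`_i <= (sorted_comp a)`_i.+1.
Proof.
move=> ik; have sorted_a : sorted <=%R (sorted_comp a) by apply/sort_sorted/le_total.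
apply: (sorted_leq_nth le_trans lexx 0 sorted_a) => //.
by rewrite inE size_sorted_comp ltnW.
by rewrite inE size_sorted_comp.
Qed.

Lemma nth_sorted_comp {k} (a : 'I_k -> R) i : (i < k)%N ->
  exists j, (sorted_comp a)`_i = a j.
Proof.
move=> ik; have : (sorted_comp a)`_i \in sorted_comp a by rewrite mem_nth ?size_sorted_comp.
by rewrite mem_sort => /mapP[j _ ->]; exists j.
Qed.

(* [weakly_supermajorized x y] is x \prec^w y in the sense of Marshall and Olkin: the
   partial sums of the increasing rearrangement of x dominate those of y. *)
Definition weakly_supermajorized {k} (x y : 'I_k -> R) : Prop :=
  forall j, (1 <= j <= k)%N ->
    \sum_(i < j) (sorted_comp y)`_i <= \sum_(i < j) (sorted_comp x)`_i.

Lemma sum_le_weakly_supermajorized (D : interval R) (f f' : R -> R) k (x y : 'I_k -> R) :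
  {in D &, forall z t, f z + f' z * (t - z) <= f t} ->
  {in D &, {homo f' : z t / z <= t}} -> {in D, forall z, f' z <= 0} ->
  (forall i, x i \in D) -> (forall i, y i \in D) ->
  weakly_supermajorized x y -> \sum_i f (x i) <= \sum_i f (y i).
Proof.
move=> tangent f'_nd f'_le0 xD yD xy.
case: k => [|m] in x y xD yD xy *; first by rewrite !big_ord0.
rewrite (sum_sorted_comp x f) (sum_sorted_comp y f).
have xsD i : (i < m.+1)%N -> (sorted_comp x)`_i \in D.
  by move=> /(nth_sorted_comp x)[j ->].
have ysD i : (i < m.+1)%N -> (sorted_comp y)`_i \in D.
  by move=> /(nth_sorted_comp y)[j ->].
have by_parts : 0 <= \sum_(i < m.+1)
    f' (sorted_comp x)`_i * ((sorted_comp y)`_i - (sorted_comp x)`_i).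
  apply: (sumr_mul_ge0_by_parts (fun i => f' (sorted_comp x)`_i)
    (fun i => (sorted_comp y)`_i - (sorted_comp x)`_i)) => [i im||j /xy].
  - by apply: f'_nd; rewrite ?xsD ?sorted_comp_nondecr // ltnW.
  - exact/f'_le0/xsD.
  - by rewrite sumrB subr_le0.
rewrite -subr_ge0 -sumrB (le_trans by_parts) // ler_sum // => i _.
by rewrite lerBrDl tangent ?xsD ?ysD.
Qed.

End WeakMajorization.

Section Psi.
Context {R : realType}.

Definition psi (y : R) := y / (expR y - 1).
Definition dpsi (y : R) := (expR y - 1 - y * expR y) / (expR y - 1) ^+ 2.
Definition d2psi (y : R) := expR y * ((y - 2) * expR y + y + 2) / (expR y - 1) ^+ 3.

Lemma expRm1_gt0 (y : R) : 0 < y -> 0 < expR y - 1.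
Proof. by move=> y0; rewrite subr_gt0 expR_gt1. Qed.

Lemma one_subr_mul_expR_le1 (y : R) : (1 - y) * expR y <= 1.
Proof.
have : (1 - y) * expR y <= expR (- y) * expR y.
  by rewrite ler_pM2r ?expR_gt0 // expR_ge1Dx.
by rewrite -expRD addNr expR0.
Qed.

Lemma is_derive_psi (y : R) : 0 < y -> is_derive y 1 psi (dpsi y).
Proof.
move=> y0; have ey1 := expRm1_gt0 y y0.
have ? : expR y - 1 != 0 by rewrite gt_eqF.
rewrite /psi; apply: is_derive_eq.
by rewrite /dpsi /GRing.scale /=; field.
Qed.

Lemma is_derive_dpsi (y : R) : 0 < y -> is_derive y 1 dpsi (d2psi y).
Proof.
move=> y0; have ey1 := expRm1_gt0 y y0.
have ? : expR y - 1 != 0 by rewrite gt_eqF.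
have ? : (expR y - 1) ^+ 2 != 0 by rewrite expf_neq0.
rewrite /dpsi; apply: is_derive_eq.
by rewrite /d2psi /GRing.scale /=; field.
Qed.

Lemma dpsi_le0 (y : R) : 0 < y -> dpsi y <= 0.
Proof.
move=> y0; rewrite /dpsi pmulr_lle0 ?invr_gt0 ?exprn_gt0 ?expRm1_gt0 //.
by have := one_subr_mul_expR_le1 y; lra.
Qed.

Lemma d2psi_ge0 (y : R) : 0 < y -> 0 <= d2psi y.
Proof.
move=> y0.
have num_ge0 : 0 <= (y - 2) * expR y + y + 2.
  have -> : 0 = (0 - 2) * expR 0 + 0 + 2 :> R by rewrite expR0; ring.
  apply: (ger0_is_derive_le (fun t => (t - 2) * expR t + t + 2)
                            (fun t => (t - 1) * expR t + 1) (ltW y0)) => [t _|t _].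
  - apply: is_derive_eq; rewrite /GRing.scale /=; ring.
  - by have := one_subr_mul_expR_le1 t; lra.
by rewrite /d2psi divr_ge0 ?mulr_ge0 ?expR_ge0 ?exprn_ge0 // ltW ?expRm1_gt0.
Qed.

Lemma dpsi_nondecr : {in `]0, +oo[ &, {homo dpsi : z y / z <= y}}.
Proof.
move=> z y; rewrite !in_itv /= !andbT => z0 y0 zy.
apply: (ger0_is_derive_le dpsi d2psi zy) => [t /andP[zt _]|t /andP[zt _]].
  exact/is_derive_dpsi/(lt_le_trans z0 zt).
exact/d2psi_ge0/(lt_trans z0 zt).
Qed.

Lemma psi_tangent : {in `]0, +oo[ &, forall z y, psi z + dpsi z * (y - z) <= psi y}.
Proof.
apply: tangent_le_of_nondecr_derive dpsi_nondecr => y.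
by rewrite in_itv /= andbT => /is_derive_psi.
Qed.

Lemma sum_psi_le_weakly_supermajorized (c : R) k (x y : 'I_k -> R) : 0 < c ->
  (forall i, 0 < x i) -> (forall i, 0 < y i) -> weakly_supermajorized x y ->
  \sum_i psi (c * x i) <= \sum_i psi (c * y i).
Proof.
move=> c0 x0 y0.
have posE (t : R) : (t \in `]0, +oo[) = (0 < t) by rewrite in_itv /= andbT.
apply: (sum_le_weakly_supermajorized `]0, +oo[ (fun t => psi (c * t))
  (fun t => c * dpsi (c * t))) => [z t|z t|z|i|i]; rewrite ?posE //.
- move=> z0 t0; have := psi_tangent (c * z) (c * t).
  by rewrite !posE !mulr_gt0 // -mulrBr mulrCA mulrA; apply.
- move=> z0 t0 zt; rewrite ler_pM2l // dpsi_nondecr ?posE ?mulr_gt0 //.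
  by rewrite ler_pM2l.
- by move=> z0; rewrite pmulr_rle0 // dpsi_le0 // mulr_gt0.
Qed.

End Psi.

Section ExponentialReversedHazard.
Context {R : realType}.

(* Reversed hazard rate of Exp(lam) and its integral over [x, +oo[. *)
Definition exp_rhazard (lam x : R) := lam * expR (- (lam * x)) / (1 - expR (- (lam * x))).
Definition exp_cum_rhazard (lam x : R) := - ln (1 - expR (- (lam * x))).

Context {lam x : R} (lam0 : 0 < lam) (x0 : 0 < x).

Lemma exp_cdf_gt0_lt1 : 0 < 1 - expR (- (lam * x)) < 1.
Proof.
have : expR (- (lam * x)) < 1 by rewrite expR_lt1 oppr_lt0 mulr_gt0.
by have := expR_gt0 (- (lam * x)); rewrite subr_gt0 gtrBl => -> ->.
Qed.

Lemma exp_cum_rhazard_gt0 : 0 < exp_cum_rhazard lam x.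
Proof. by rewrite oppr_gt0 ln_lt0 // exp_cdf_gt0_lt1. Qed.

Lemma exp_rhazard_gt0 : 0 < exp_rhazard lam x.
Proof.
have /andP[u0 _] := exp_cdf_gt0_lt1.
by rewrite divr_gt0 // mulr_gt0 // expR_gt0.
Qed.

Lemma is_derive_exp_cum_rhazard :
  is_derive x 1 (exp_cum_rhazard lam) (- exp_rhazard lam x).
Proof.
have /andP[u0 _] := exp_cdf_gt0_lt1.
(* [dexp] and [dln] are consumed by instance resolution in [is_derive_eq]. *)
have dexp : is_derive x 1 (expR \o (fun z => - (lam * z))) (expR (- (lam * x)) * - lam).
  apply: is_derive1_comp; apply: is_derive_eq.
  by rewrite /GRing.scale /= mulr1.
have dcdf : is_derive x 1 (fun z => 1 - expR (- (lam * z))) (lam * expR (- (lam * x))).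
  by apply: is_derive_eq; ring.
have dln := is_derive1_comp (f := @ln R) (g := fun z => 1 - expR (- (lam * z)))
  (is_derive1_ln u0) dcdf.
rewrite /exp_cum_rhazard; apply: is_derive_eq.
by rewrite /exp_rhazard mulrC.
Qed.

Lemma GE_cdfE a : GE_cdf a lam x = expR (- (a * exp_cum_rhazard lam x)).
Proof.
have /andP[u0 _] := exp_cdf_gt0_lt1.
by rewrite /GE_cdf leNgt x0 /powR gt_eqF // mulrN opprK.
Qed.

End ExponentialReversedHazard.

Section Hazard.
Context {R : realType} {d : measure_display} {T : measurableType d}.
Variable P : probability T R.

Lemma survival_cdf {Y : {RV P >-> R}} {F : R -> R} :
  (forall x, P [set w | Y w <= x] = (F x)%:E) -> forall x, survival P Y x = 1 - F x.
Proof.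
move=> cdfY x; rewrite /survival.
have -> : [set w | x < Y w] = ~` [set w | Y w <= x].
  by apply/seteqP; split => w /=; rewrite ltNge => /negP.
have mY : measurable [set w | Y w <= x].
  have -> : [set w | Y w <= x] = Y @^-1` `]-oo, x].
    by apply/seteqP; split => w; rewrite /= in_itv.
  exact: measurable_funPTI.
by rewrite probability_setC // cdfY.
Qed.

Lemma survival_minRV {n} (X : 'I_n.+1 -> T -> R) : mutually_independent P X ->
  survival P (minRV X) = fun x => \prod_(i < n.+1) survival P (X i) x.
Proof.
move=> indX; apply/funext => x; rewrite /survival.
have -> : [set w | x < minRV X w] =
    \bigcap_(i in [set: 'I_n.+1]) (X i @^-1` `]x, +oo[).
  apply/seteqP; split => w /=.
    by move=> /bigmin_gtP[_ gt_x] i _ /=; rewrite in_itv /= andbT gt_x.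
  move=> gt_x; apply/bigmin_gtP; split => [|i _].
  - by have := gt_x ord0 I; rewrite /= in_itv /= andbT.
  - by have := gt_x i I; rewrite /= in_itv /= andbT.
rewrite (indX (fun=> `]x, +oo[%classic)) => [|i]; last exact: measurable_itv.
apply: eq_bigr => i _; congr (fine (P _)).
by apply/seteqP; split => w; rewrite /= in_itv /= andbT.
Qed.

Lemma hazard_minRV {n} (X : 'I_n.+1 -> T -> R) (dS : 'I_n.+1 -> R) (x : R) :
  mutually_independent P X ->
  (forall i, is_derive x 1 (survival P (X i)) (dS i)) ->
  (forall i, survival P (X i) x != 0) ->
  hazard P (minRV X) x = \sum_i hazard P (X i) x.
Proof.
move=> indX dSX SX_neq0.
have dSmin := is_derive_bigprod (index_enum 'I_n.+1) dSX SX_neq0.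
rewrite /hazard (survival_minRV X indX) derive1E derive_val.
have S_neq0 : \prod_i survival P (X i) x != 0 by apply/prodf_neq0.
under [RHS]eq_bigr do rewrite derive1E derive_val.
rewrite mulNr mulrAC mulfV // mul1r -sumrN.
by apply: eq_bigr => i _; rewrite mulNr.
Qed.

Section GEHazard.
Context {lam a : R} {Y : {RV P >-> R}}.
Hypotheses (lam0 : 0 < lam) (a0 : 0 < a) (lawY : has_GE_law P Y a lam).

Lemma survival_GE x : 0 < x ->
  survival P Y x = 1 - expR (- (a * exp_cum_rhazard lam x)).
Proof. by move=> x0; rewrite (survival_cdf lawY) GE_cdfE. Qed.

Context {x : R} (x0 : 0 < x).

Lemma survival_GE_gt0 : 0 < survival P Y x.
Proof.
by rewrite survival_GE // subr_gt0 expR_lt1 oppr_lt0 mulr_gt0 ?exp_cum_rhazard_gt0.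
Qed.

Lemma is_derive_survival_GE : is_derive x 1 (survival P Y)
  (- (a * exp_rhazard lam x * expR (- (a * exp_cum_rhazard lam x)))).
Proof.
have dH := is_derive_exp_cum_rhazard lam0 x0.
have dexp : is_derive x 1 (fun y => - (a * exp_cum_rhazard lam y)) (a * exp_rhazard lam x).
  by apply: is_derive_eq; rewrite /GRing.scale /= mulrN opprK.
have dS : is_derive x 1 (fun y => 1 - expR (- (a * exp_cum_rhazard lam y)))
    (- (a * exp_rhazard lam x * expR (- (a * exp_cum_rhazard lam x)))).
  have dE := is_derive1_comp (f := expR) (is_derive_expR _) dexp.
  by apply: is_derive_eq; ring.
apply: near_eq_is_derive dS; near=> y; rewrite survival_GE //.
near: y; exact: lt_nbhsr.
Unshelve. all: by end_near.
Qed.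

Lemma hazard_GE : hazard P Y x =
  exp_rhazard lam x / exp_cum_rhazard lam x * psi (exp_cum_rhazard lam x * a).
Proof.
have dS := is_derive_survival_GE.
rewrite /hazard derive1E derive_val survival_GE // opprK /psi.
have H0 := exp_cum_rhazard_gt0 lam0 x0.
set H := exp_cum_rhazard lam x.
have eHa : 1 < expR (H * a) by rewrite expR_gt1 mulr_gt0.
rewrite (mulrC a H) expRN.
field; apply/and3P; split; apply: lt0r_neq0 => //.
  by rewrite subr_gt0.
exact: expR_gt0.
Qed.

End GEHazard.

Lemma hazard_minRV_GE {n} {lam x : R} {alpha : 'I_n.+1 -> R}
    {X : 'I_n.+1 -> {RV P >-> R}} :
  0 < lam -> (forall i, 0 < alpha i) -> mutually_independent P (fun i => X i : T -> R) ->
  (forall i, has_GE_law P (X i) (alpha i) lam) -> 0 < x ->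
  hazard P (minRV (fun i => X i : T -> R)) x =
    exp_rhazard lam x / exp_cum_rhazard lam x *
      \sum_i psi (exp_cum_rhazard lam x * alpha i).
Proof.
move=> lam0 alpha0 indX lawX x0.
rewrite (hazard_minRV _ _ _ indX (fun i => is_derive_survival_GE lam0 (lawX i) x0)).
  by rewrite mulr_sumr; apply: eq_bigr => i _; exact: hazard_GE.
by move=> i; exact/lt0r_neq0/(survival_GE_gt0 lam0 (alpha0 i) (lawX i) x0).
Qed.

End Hazard.

Theorem mainTheorem11 (R : realType) (d : measure_display) (T : measurableType d)
  (P : probability T R) (n : nat) (lam : R) (alpha alphas : 'I_n.+1 -> R)
  (X Xs : 'I_n.+1 -> {RV P >-> R}) :
  0 < lam ->
  (forall i, 0 < alpha i) -> (forall i, 0 < alphas i) ->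
  mutually_independent P (fun i => (X i : T -> R)) ->
  mutually_independent P (fun i => (Xs i : T -> R)) ->
  (forall i, has_GE_law P (X i) (alpha i) lam) ->
  (forall i, has_GE_law P (Xs i) (alphas i) lam) ->
  (forall j : nat, (1 <= j <= n.+1)%N ->
     \sum_(i < j) (sorted_comp alpha)`_i <= \sum_(i < j) (sorted_comp alphas)`_i) ->
  hr_le P (minRV (fun i => (X i : T -> R))) (minRV (fun i => (Xs i : T -> R))).
Proof.
move=> lam0 alpha0 alphas0 indX indXs lawX lawXs maj x x0.
rewrite (hazard_minRV_GE P lam0 alphas0 indXs lawXs x0).
rewrite (hazard_minRV_GE P lam0 alpha0 indX lawX x0).
apply: ler_wpM2l.
  by rewrite divr_ge0 ?ltW ?exp_rhazard_gt0 ?exp_cum_rhazard_gt0.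
exact: sum_psi_le_weakly_supermajorized (exp_cum_rhazard_gt0 lam0 x0) alphas0 alpha0 maj.
Qed.
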